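(* Let $r,s,t,u,v$ be non-negative integers with $u+v=4t-r-s+3$. Let $G=(r,s,t,t,t,u)$ and $H=(r,s,t,t,t,v)$, with interesting factors $g(x)$ and $h(x)$ respectively. Then $$g(x)=-h(-x+6t+4).$$
   Context: All graphs are finite and simple. For integers $1\le j\le k$, a $(j,k)$-biclique is a graph whose vertex set is the disjoint union of a $j$-clique and a $k$-clique, with an arbitrary set of additional edges each joining a vertex of the $j$-clique to a vertex of the $k$-clique. For non-negative integers $a,b,c,d,e,f$, the notation $(a,b,c,d,e,f)$ denotes the $(3,k)$-biclique with $k=a+b+c+d+e+f$, whose $3$-clique is $\{v_1,v_2,v_3\}$, in which every vertex of the $k$-clique is adjacent to exactly one or exactly two of $v_1,v_2,v_3$, and exactly $a$ (resp. $b$, $c$) vertices of the $k$-clique are adjacent to $v_1$ only (resp. $v_2$ only, $v_3$ only), and exactly $d$ (resp. $e$, $f$) vertices of the $k$-clique are adjacent to exactly $v_2$ and $v_3$ (resp. exactly $v_1$ and $v_3$, exactly $v_1$ and $v_2$). This determines the graph up to isomorphism. The interesting factor of a $(3,k)$-biclique $G$ is the cubic polynomial $P_G(x)/(x)_k$, where $P_G$ is the chromatic polynomial and $(x)_k=x(x-1)\cdots(x-k+1)$. *)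

From HB Require Import structures.
From mathcomp Require Import all_boot all_order all_algebra.
Set Implicit Arguments. Unset Strict Implicit. Unset Printing Implicit Defensive.
Import Order.TTheory GRing.Theory Num.Theory.

(* Vertex set: 'I_3 (the 3-clique v1,v2,v3 = 0,1,2) + 'I_k (the k-clique).
   The vertices of the k-clique are numbered 0..k-1; the first a are adjacent
   to v1 only, the next b to v2 only, the next c to v3 only, the next d to
   exactly v2,v3, the next e to exactly v1,v3, the last f to exactly v1,v2. *)

Definition bk (a b c d e f : nat) : nat := a + b + c + d + e + f.

Definition bvert (a b c d e f : nat) : finType := ('I_3 + 'I_(bk a b c d e f))%type.

Definition cross_adj (a b c d e f : nat) (i : nat) (j : 'I_3) : bool :=
  if i < a then nat_of_ord j == 0
  else if i < a + b then nat_of_ord j == 1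
  else if i < a + b + c then nat_of_ord j == 2
  else if i < a + b + c + d then nat_of_ord j != 0
  else if i < a + b + c + d + e then nat_of_ord j != 1
  else nat_of_ord j != 2.

Definition badj (a b c d e f : nat) (x y : bvert a b c d e f) : bool :=
  match x, y with
  | inl i, inl j => i != j
  | inr i, inr j => i != j
  | inl j, inr i => cross_adj a b c d e f i j
  | inr i, inl j => cross_adj a b c d e f i j
  end.

Definition chrom (a b c d e f : nat) (n : nat) : nat :=
  #|[set col : {ffun bvert a b c d e f -> 'I_n} |
     [forall x, forall y, badj x y ==> (col x != col y)]]|.

Definition falling (k : nat) (x : int) : int := \prod_(i < k) (x - i%:Z)%R.

Definition interesting_factor (a b c d e f : nat) (g : {poly int}) : Prop :=
  forall n : nat, ((chrom a b c d e f n)%:Z = g.[n%:Z] * falling (bk a b c d e f) n%:Z)%R.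

From HB Require Import structures.
From mathcomp Require Import all_boot all_order all_algebra.
From mathcomp Require Import ring zify.
Import GRing.Theory Num.Theory.
Local Open Scope ring_scope.

(* A proper n-colouring of the biclique is an injective colouring q of the
   k-clique ((n)_k choices) together with pairwise distinct colours for v1, v2,
   v3, each avoiding the q-image of its neighbourhood N_j in the k-clique.  As q
   is injective, the colours avoiding all N_j for j in a set J number n minus
   the size of the union of these N_j; inclusion-exclusion over the coincidences
   among the three colours then gives the interesting factor
     (x - |N1|)(x - |N2|)(x - |N3|) - sum (x - |Ni u Nj|)(x - |Nl|) + 2 (x - k),
   whose coefficients are linear in a, ..., f.  The theorem is the resulting
   identity between two explicit cubics once v = 4t + 3 - r - s - u. *)

Notation indicator b := ((nat_of_bool b)%:R : int).

Section DistinctTriples.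
Variable T : finType.

Lemma sum_indicator_card (A : {set T}) : \sum_(y : T) indicator (y \in A) = #|A|%:R.
Proof.
rewrite -sum1_card natr_sum [RHS]big_mkcond.
by apply: eq_bigr => y _; case: (y \in A).
Qed.

Lemma indicator_andb (b1 b2 : bool) : indicator (b1 && b2) = indicator b1 * indicator b2.
Proof. by case: b1; case: b2; rewrite ?mul1r ?mul0r. Qed.

Lemma cardsD1_int (y : T) (A : {set T}) : #|A :\ y|%:R = #|A|%:R - indicator (y \in A) :> int.
Proof. rewrite [#|A|](cardsD1 y) natrD; ring. Qed.

Variables A0 A1 A2 : {set T}.

Lemma sum_distinct_third (y0 y1 : T) :
  \sum_(y2 : T) indicator [&& y0 != y1, y0 != y2, y1 != y2, y0 \in A0, y1 \in A1 & y2 \in A2] =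
  indicator [&& y0 != y1, y0 \in A0 & y1 \in A1] *
    (#|A2|%:R - indicator (y0 \in A2) - indicator (y1 \in A2)).
Proof.
case: (boolP [&& _, _ & _]) => [/and3P[y01 y0A0 y1A1] | not_y01]; last first.
  rewrite mul0r big1 // => y2 _; move: not_y01.
  by case: (y0 != y1); case: (y0 \in A0); case: (y1 \in A1); rewrite ?andbF.
rewrite mul1r; transitivity (\sum_(y2 : T) indicator (y2 \in A2 :\ y0 :\ y1)).
  apply: eq_bigr => y2 _; rewrite y01 y0A0 y1A1 !inE ![y2 == _]eq_sym.
  by case: (y0 != y2); case: (y1 != y2).
by rewrite sum_indicator_card !cardsD1_int !inE eq_sym y01.
Qed.

Lemma sum_distinct_second (y0 : T) :
  \sum_(y1 : T) indicator [&& y0 != y1, y0 \in A0 & y1 \in A1] *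
                (#|A2|%:R - indicator (y0 \in A2) - indicator (y1 \in A2)) =
  indicator (y0 \in A0) *
    ((#|A1|%:R - indicator (y0 \in A1)) * (#|A2|%:R - indicator (y0 \in A2))
     - (#|A1 :&: A2|%:R - indicator (y0 \in A1 :&: A2))).
Proof.
transitivity (\sum_(y1 : T)
  (indicator (y0 \in A0) * (#|A2|%:R - indicator (y0 \in A2)) * indicator (y1 \in A1 :\ y0)
   - indicator (y0 \in A0) * indicator (y1 \in A1 :&: A2 :\ y0))).
  apply: eq_bigr => y1 _; rewrite !inE [y1 == y0]eq_sym.
  by case: (y0 != y1); case: (y0 \in A0); case: (y1 \in A1); case: (y1 \in A2) => /=; ring.
by rewrite sumrB -!mulr_sumr !sum_indicator_card !cardsD1_int; ring.
Qed.

Lemma card_distinct_triples :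
  \sum_(y0 : T) \sum_(y1 : T) \sum_(y2 : T)
     indicator [&& y0 != y1, y0 != y2, y1 != y2, y0 \in A0, y1 \in A1 & y2 \in A2] =
  #|A0|%:R * #|A1|%:R * #|A2|%:R - #|A0 :&: A1|%:R * #|A2|%:R
  - #|A0 :&: A2|%:R * #|A1|%:R - #|A1 :&: A2|%:R * #|A0|%:R
  + #|A0 :&: A1 :&: A2|%:R *+ 2.
Proof.
under eq_bigr => y0 _ do under eq_bigr => y1 _ do rewrite sum_distinct_third.
under eq_bigr => y0 _ do rewrite sum_distinct_second.
transitivity (\sum_(y0 : T) (#|A1|%:R * #|A2|%:R * indicator (y0 \in A0)
   - #|A1|%:R * indicator (y0 \in A0 :&: A2) - #|A2|%:R * indicator (y0 \in A0 :&: A1)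
   - #|A1 :&: A2|%:R * indicator (y0 \in A0) + indicator (y0 \in A0 :&: A1 :&: A2) *+ 2)).
  apply: eq_bigr => y0 _; rewrite !inE.
  by case: (y0 \in A0); case: (y0 \in A1); case: (y0 \in A2) => /=; ring.
by rewrite !big_split /= !sumrN -!mulr_sumr !sum_indicator_card; ring.
Qed.

End DistinctTriples.

Lemma card_setC_imset {aT rT : finType} (f : aT -> rT) (X : {set aT}) :
  injective f -> #|~: (f @: X)|%:R = #|rT|%:R - #|X|%:R :> int.
Proof. by move=> inj_f; rewrite -(cardsC (f @: X)) natrD card_imset //; ring. Qed.

Lemma poly_eq_horner (R : numDomainType) (p q : {poly R}) :
  (forall x : R, p.[x] = q.[x]) -> p = q.
Proof.
move=> epq; apply/eqP; rewrite -subr_eq0; apply/eqP.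
apply: (@roots_geq_poly_eq0 _ _ [seq i%:R | i <- iota 0 (size (p - q))]).
- by apply/allP=> x _; rewrite /root hornerD hornerN epq subrr.
- by rewrite map_inj_uniq ?iota_uniq // => i j /eqP; rewrite eqr_nat => /eqP.
- by rewrite size_map size_iota.
Qed.

Definition shiftX (m : nat) : {poly int} := 'X - m%:R%:P.

Definition interesting_poly (a b c d e f : nat) : {poly int} :=
  shiftX (a + e + f) * shiftX (b + d + f) * shiftX (c + d + e)
  - shiftX (a + b + d + e + f) * shiftX (c + d + e)
  - shiftX (a + c + d + e + f) * shiftX (b + d + f)
  - shiftX (b + c + d + e + f) * shiftX (a + e + f)
  + shiftX (bk a b c d e f) *+ 2.

Lemma interesting_poly_reflect (r s t u v : nat) :
  (u + v + r + s = 4 * t + 3)%N ->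
  interesting_poly r s t t t u = - (interesting_poly r s t t t v \Po ((6 * t + 4)%:R%:P - 'X)).
Proof.
move=> huv; have ev : v%:R = (4 * t + 3)%:R - u%:R - r%:R - s%:R :> int.
  by rewrite -huv !natrD; ring.
apply: poly_eq_horner => x; rewrite hornerN horner_comp /interesting_poly /shiftX /bk !mulr2n.
by rewrite !(hornerD, hornerN, hornerM, hornerX, hornerC) !natrD ev; ring.
Qed.

Lemma falling_ffact (k n : nat) : falling k n%:Z = (n ^_ k)%:R.
Proof.
elim: k n => [|k IHk] [|n]; rewrite /falling ?big_ord0 // big_ord_recl /= ?subr0 ?mul0r //.
rewrite ffactSS natrM -IHk natz; congr (_ * _).
by apply: eq_bigr => i _; rewrite /bump /= subzSS.
Qed.

Section Biclique.
Variables a b c d e f : nat.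
Notation K := (bk a b c d e f).
Notation cr := (cross_adj a b c d e f).
Notation v1 := (@Ordinal 3 0 isT).
Notation v2 := (@Ordinal 3 1 isT).
Notation v3 := (@Ordinal 3 2 isT).

Lemma card_adjacency_pattern (S : {set 'I_K}) (h : bool -> bool -> bool -> bool) :
  (forall i : 'I_K, (i \in S) = h (cr i v1) (cr i v2) (cr i v3)) ->
  #|S| = (a * h true false false + b * h false true false + c * h false false true
         + d * h false true true + e * h true false true + f * h true true false)%N.
Proof.
move=> memS; pose pattern i := nat_of_bool (h (cr i v1) (cr i v2) (cr i v3)).
have block lo hi p : (forall i, lo <= i < hi -> pattern i = p)%N ->
    (\sum_(lo <= i < hi) pattern i = (hi - lo) * p)%N.
  by move=> pattern_p; rewrite (eq_big_nat _ _ pattern_p) sum_nat_const_nat.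
transitivity (\sum_(0 <= i < K) pattern i)%N.
  rewrite big_mkord -sum1_card big_mkcond; apply: eq_bigr => i _ /=.
  by rewrite memS /pattern; case: (h _ _ _).
rewrite (@big_cat_nat _ _ _ a) 1?(@big_cat_nat _ _ _ (a + b) a)
  1?(@big_cat_nat _ _ _ (a + b + c) (a + b)) 1?(@big_cat_nat _ _ _ (a + b + c + d) (a + b + c))
  1?(@big_cat_nat _ _ _ (a + b + c + d + e) (a + b + c + d)) /bk; try lia.
rewrite (block _ _ (h true false false)) 1?(block _ _ (h false true false))
  1?(block _ _ (h false false true)) 1?(block _ _ (h false true true))
  1?(block _ _ (h true false true)) 1?(block _ _ (h true true false)).
  by rewrite subn0 !addKn /= !addnA.
all: by move=> i lt_i; rewrite /pattern /cross_adj; repeat case: ifP => ? //; lia.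
Qed.

Variable n : nat.
Notation V := (bvert a b c d e f).
Notation triple := ('I_n * 'I_n * 'I_n)%type.
Notation clique_colouring := {ffun 'I_K -> 'I_n}.

Definition proper (col : {ffun V -> 'I_n}) :=
  [forall x, forall y, badj x y ==> (col x != col y)].

Definition triple_at (y : triple) (j : 'I_3) : 'I_n :=
  if nat_of_ord j == 0%N then y.1.1 else if nat_of_ord j == 1%N then y.1.2 else y.2.

Definition join_colouring (p : triple * clique_colouring) : {ffun V -> 'I_n} :=
  [ffun x => match x with inl j => triple_at p.1 j | inr i => p.2 i end].

Definition split_colouring (col : {ffun V -> 'I_n}) : triple * clique_colouring :=
  ((col (inl v1), col (inl v2), col (inl v3)), [ffun i => col (inr i)]).

Lemma join_colouringK : cancel join_colouring split_colouring.
Proof.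
move=> [[[y0 y1] y2] q]; rewrite /split_colouring !ffunE; congr (_, _).
by apply/ffunP => i; rewrite !ffunE.
Qed.

Lemma split_colouringK : cancel split_colouring join_colouring.
Proof.
move=> col; apply/ffunP => -[j|i]; rewrite !ffunE //=.
by case: j => [[|[|[|m]]] lt_j3] //=; congr (col (inl _)); apply: val_inj.
Qed.

Definition nbhd (j : 'I_3) : {set 'I_K} := [set i : 'I_K | cr i j].

Definition free_colours (q : clique_colouring) (j : 'I_3) : {set 'I_n} := ~: (q @: nbhd j).

Lemma free_coloursP (q : clique_colouring) j y :
  reflect (forall i : 'I_K, cr i j -> q i != y) (y \in free_colours q j).
Proof.
rewrite inE; apply: (iffP idP) => [y_free i ij | q_ne_y].
  by apply: contraNneq y_free => <-; rewrite imset_f ?inE.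
by apply/negP => /imsetP[i]; rewrite inE => /q_ne_y/eqP qi_ne_y /esym.
Qed.

Definition admissible (q : clique_colouring) (y0 y1 y2 : 'I_n) :=
  [&& y0 != y1, y0 != y2, y1 != y2, y0 \in free_colours q v1,
      y1 \in free_colours q v2 & y2 \in free_colours q v3].

Lemma proper_join y0 y1 y2 (q : clique_colouring) :
  proper (join_colouring ((y0, y1, y2), q)) = injectiveb q && admissible q y0 y1 y2.
Proof.
set col := join_colouring _.
apply/idP/idP => [/forallP proper_col | /andP[/injectiveP inj_q]].
  have sep x z : badj x z -> col x != col z.
    by move=> xz; have /forallP/(_ z)/implyP := proper_col x; apply.
  apply/andP; split.
    apply/injectiveP => i i' qii'; apply/eqP.
    have := sep (inr i) (inr i'); rewrite /col !ffunE /= qii' eqxx.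
    by case: eqP => // _; apply.
  apply/and5P; split; [| | | | apply/andP; split].
  - by have := sep (inl v1) (inl v2) isT; rewrite /col !ffunE.
  - by have := sep (inl v1) (inl v3) isT; rewrite /col !ffunE.
  - by have := sep (inl v2) (inl v3) isT; rewrite /col !ffunE.
  1-3: apply/free_coloursP => i ij.
  1-3: by have := sep (inl _) (inr i) ij; rewrite /col !ffunE eq_sym.
case/and5P => y01 y02 y12 /free_coloursP y0_free.
case/andP => /free_coloursP y1_free /free_coloursP y2_free.
have free_at j (i : 'I_K) : cr i j -> q i != triple_at (y0, y1, y2) j.
  case: j => [[|[|[|m]]] lt_j3] //= ij.
  - exact: y0_free.
  - exact: y1_free.
  - exact: y2_free.
apply/forallP => -[j|i]; apply/forallP => -[j'|i']; apply/implyP; rewrite /col !ffunE /=.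
- by case: j => [[|[|[|m]]] ?]; case: j' => [[|[|[|m']]] ?] //= _; rewrite 1?eq_sym.
- by rewrite eq_sym; apply: free_at.
- exact: free_at.
- by apply: contra => /eqP/inj_q ->.
Qed.

Lemma chrom_sum_injective :
  (chrom a b c d e f n)%:R = \sum_(q : clique_colouring) indicator (injectiveb q) *
    \sum_(y0 : 'I_n) \sum_(y1 : 'I_n) \sum_(y2 : 'I_n) indicator (admissible q y0 y1 y2).
Proof.
rewrite -sum_indicator_card.
under eq_bigr => col _ do rewrite inE -/(proper col).
rewrite (reindex join_colouring (onW_bij _ (Bijective join_colouringK split_colouringK))).
transitivity (\sum_(y : triple) \sum_(q : clique_colouring)
                indicator (proper (join_colouring (y, q)))).
  by rewrite pair_bigA; apply: eq_bigr => -[y q].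
rewrite exchange_big; apply: eq_bigr => q _.
rewrite pair_bigA pair_bigA mulr_sumr; apply: eq_bigr => -[[y0 y1] y2] _.
by rewrite proper_join indicator_andb.
Qed.

Lemma sum_admissible (q : clique_colouring) : injective q ->
  \sum_(y0 : 'I_n) \sum_(y1 : 'I_n) \sum_(y2 : 'I_n) indicator (admissible q y0 y1 y2) =
  (interesting_poly a b c d e f).[n%:Z].
Proof.
move=> inj_q; rewrite card_distinct_triples /free_colours -!setCU -!imsetU.
rewrite !(card_setC_imset _ _ inj_q) card_ord.
rewrite [#|nbhd v1|](@card_adjacency_pattern _ (fun x _ _ => x))
  ?[#|nbhd v2|](@card_adjacency_pattern _ (fun _ x _ => x))
  ?[#|nbhd v3|](@card_adjacency_pattern _ (fun _ _ x => x))
  ?[#|nbhd v1 :|: nbhd v2|](@card_adjacency_pattern _ (fun x y _ => x || y))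
  ?[#|nbhd v1 :|: nbhd v3|](@card_adjacency_pattern _ (fun x _ y => x || y))
  ?[#|nbhd v2 :|: nbhd v3|](@card_adjacency_pattern _ (fun _ x y => x || y))
  ?[#|_ :|: _ :|: _|](@card_adjacency_pattern _ (fun x y z => x || y || z)) /=.
  rewrite /interesting_poly /shiftX /bk !mulr2n !(hornerD, hornerN, hornerM, hornerX, hornerC).
  by rewrite -natz; ring.
all: by move=> i; rewrite /nbhd !inE.
Qed.

Lemma chrom_interesting_poly :
  (chrom a b c d e f n)%:Z = (interesting_poly a b c d e f).[n%:Z] * falling K n%:Z.
Proof.
have card_injective : #|[set q : clique_colouring | injectiveb q]| = n ^_ K.
  by rewrite card_inj_ffuns !card_ord.
rewrite -natz chrom_sum_injective falling_ffact -card_injective -sum_indicator_card.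
rewrite mulr_sumr; apply: eq_bigr => q _; rewrite inE mulrC.
by case: injectiveP => [/sum_admissible -> | _]; rewrite /= ?mulr0.
Qed.

End Biclique.

Theorem mainTheorem7 (r s t u v : nat) (huv : (u + v + r + s = 4 * t + 3)%N) :
  exists g h : {poly int},
    interesting_factor r s t t t u g /\
    interesting_factor r s t t t v h /\
    g = - (h \Po (((6 * t + 4)%N)%:R%:P - 'X)).
Proof.
exists (interesting_poly r s t t t u), (interesting_poly r s t t t v).
split; [exact: chrom_interesting_poly | split; [exact: chrom_interesting_poly |]].
exact: interesting_poly_reflect.
Qed.
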